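(* Let $F_1,\dots,F_n:\mathbb{R}^d\to\mathbb{R}^d$ with each $F_i$ $L_i$-Lipschitz, $F=\frac1n\sum_iF_i$ monotone and $L$-Lipschitz, and $z_*$ with $F(z_* )=0$. If SEG-RR is run with extrapolation step size $\gamma_2\le\frac1L$ and update step size $\gamma_1>0$, then for every epoch $k$, with $\hat z_0^k=z_0^k-\gamma_2F(z_0^k)$, $$\|z_0^k-z_*-\gamma_1nF(\hat z_0^k)\|^2\le(1+4\gamma_1^2n^2L^2)\|z_0^k-z_*\|^2-\gamma_1\gamma_2n(1-\gamma_2^2L^2)\|F(z_0^k)\|^2.$$
   Context: $F$ monotone: $\langle F(z_1)-F(z_2),z_1-z_2\rangle\ge0$. SEG-RR with step sizes $\gamma_1,\gamma_2$: for each epoch $k$ draw a permutation $\pi^k$ of $\{1,\dots,n\}$ uniformly at random; for $i=0,\dots,n-1$ set $\bar z_i^k=z_i^k-\gamma_2F_{\pi_i^k}(z_i^k)$, $z_{i+1}^k=z_i^k-\gamma_1F_{\pi_i^k}(\bar z_i^k)$; then $z_0^{k+1}=z_n^k$. *)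

From HB Require Import structures.
From mathcomp Require Import all_boot all_order all_fingroup all_algebra.
From mathcomp Require Import reals.
Set Implicit Arguments. Unset Strict Implicit. Unset Printing Implicit Defensive.
Import Order.TTheory GRing.Theory Num.Theory.
Local Open Scope ring_scope.

Section Defs.
Variables (R : realType) (d : nat).
Notation vec := 'rV[R]_d.

Definition dotv (u v : vec) : R := \sum_(j < d) u ord0 j * v ord0 j.
Definition enorm (u : vec) : R := Num.sqrt (dotv u u).

Definition lipschitz (L : R) (f : vec -> vec) : Prop :=
  forall x y, enorm (f x - f y) <= L * enorm (x - y).

Definition monotone (f : vec -> vec) : Prop :=
  forall x y, 0 <= dotv (f x - f y) (x - y).

Definition seg_step (g1 g2 : R) (Fi : vec -> vec) (z : vec) : vec :=
  z - g1 *: Fi (z - g2 *: Fi z).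

Definition seg_epoch (n : nat) (g1 g2 : R) (F : 'I_n -> vec -> vec)
  (p : 'S_n) (z : vec) : vec :=
  foldl (fun w i => seg_step g1 g2 (F (p i)) w) z (enum 'I_n).

Fixpoint seg_rr (n : nat) (g1 g2 : R) (F : 'I_n -> vec -> vec)
  (pi : nat -> 'S_n) (z0 : vec) (k : nat) : vec :=
  match k with
  | 0 => z0
  | k'.+1 => seg_epoch g1 g2 F (pi k') (seg_rr g1 g2 F pi z0 k')
  end.

Definition meanop (n : nat) (F : 'I_n -> vec -> vec) (z : vec) : vec :=
  n%:R^-1 *: \sum_(i < n) F i z.
End Defs.

From HB Require Import structures.
From mathcomp Require Import all_boot all_order all_fingroup all_algebra.
From mathcomp Require Import reals.
From mathcomp Require Import ring lra.
Import Order.TTheory GRing.Theory Num.Theory.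
Local Open Scope ring_scope.

(* The bound holds at every point z, not only at the SEG-RR iterates.  Write
   w = z - zstar, a = F z and b = F zhat.  Monotonicity at (zhat, zstar) gives
   <w, b> >= g2 <a, b>, and the Lipschitz bound |a - b| <= g2 L |a| gives
   2 <a, b> >= (1 - g2^2 L^2) |a|^2; together they control the cross term of
   |w - c b|^2, c = g1 n.  The quadratic term is handled, using g2 L <= 1, by
   |b|^2 <= L^2 |w - g2 a|^2 <= 2 L^2 (|w|^2 + g2^2 |a|^2) <= 4 L^2 |w|^2. *)

Section InnerProduct.
Context {R : realType} {d : nat}.
Implicit Types u v w : 'rV[R]_d.

Lemma dotvC u v : dotv u v = dotv v u.
Proof. by apply: eq_bigr => j _; rewrite mulrC. Qed.

Lemma dotvDl u v w : dotv (u + v) w = dotv u w + dotv v w.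
Proof. by rewrite /dotv -big_split; apply: eq_bigr => j _; rewrite mxE mulrDl. Qed.

Lemma dotvZl (k : R) u w : dotv (k *: u) w = k * dotv u w.
Proof. by rewrite /dotv mulr_sumr; apply: eq_bigr => j _; rewrite mxE mulrA. Qed.

Lemma dotvNl u w : dotv (- u) w = - dotv u w.
Proof. by rewrite -scaleN1r dotvZl mulN1r. Qed.

Lemma dotvBl u v w : dotv (u - v) w = dotv u w - dotv v w.
Proof. by rewrite dotvDl dotvNl. Qed.

Lemma dotvBr u v w : dotv w (u - v) = dotv w u - dotv w v.
Proof. by rewrite dotvC dotvBl !(dotvC w). Qed.

Lemma dotvDr u v w : dotv w (u + v) = dotv w u + dotv w v.
Proof. by rewrite dotvC dotvDl !(dotvC w). Qed.

Lemma dotvZr (k : R) u w : dotv w (k *: u) = k * dotv w u.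
Proof. by rewrite dotvC dotvZl dotvC. Qed.

Lemma dotvv_ge0 u : 0 <= dotv u u.
Proof. by apply: sumr_ge0 => j _; rewrite -expr2 sqr_ge0. Qed.

Lemma enorm_ge0 u : 0 <= enorm u.
Proof. exact: sqrtr_ge0. Qed.

Lemma enorm_sqr u : enorm u ^+ 2 = dotv u u.
Proof. by rewrite /enorm sqr_sqrtr // dotvv_ge0. Qed.

Lemma enormB_sqr u v :
  enorm (u - v) ^+ 2 = enorm u ^+ 2 - 2 * dotv u v + enorm v ^+ 2.
Proof. by rewrite !enorm_sqr dotvBl !dotvBr (dotvC v u); ring. Qed.

Lemma enormZ_sqr (k : R) u : enorm (k *: u) ^+ 2 = k ^+ 2 * enorm u ^+ 2.
Proof. by rewrite !enorm_sqr dotvZl dotvZr mulrA -expr2. Qed.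

Lemma enormB_sqr_le u v : enorm (u - v) ^+ 2 <= 2 * enorm u ^+ 2 + 2 * enorm v ^+ 2.
Proof.
have := dotvv_ge0 (u + v).
by rewrite enormB_sqr !enorm_sqr dotvDl !dotvDr (dotvC v u); lra.
Qed.

Lemma lipschitz_sqr {L : R} {f : 'rV[R]_d -> 'rV[R]_d} : 0 <= L -> lipschitz L f ->
  forall x y, enorm (f x - f y) ^+ 2 <= L ^+ 2 * enorm (x - y) ^+ 2.
Proof.
move=> L_ge0 fL x y.
by rewrite -exprMn ler_pXn2r ?nnegrE ?mulr_ge0 ?enorm_ge0 ?fL.
Qed.

End InnerProduct.

Section ExtragradientStep.
Context {R : realType} {d : nat} {G : 'rV[R]_d -> 'rV[R]_d} {L g2 : R}.
Context {zstar : 'rV[R]_d}.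
Hypotheses (G_monotone : monotone G) (G_lipschitz : lipschitz L G).
Hypotheses (G_zstar : G zstar = 0) (L_ge0 : 0 <= L) (g2_ge0 : 0 <= g2).
Hypothesis g2L_le1 : g2 * L <= 1.

Lemma extragradient_cross_lb z :
  g2 * (1 - g2 ^+ 2 * L ^+ 2) * enorm (G z) ^+ 2
    <= 2 * dotv (z - zstar) (G (z - g2 *: G z)).
Proof.
set a := G z; set b := G (z - g2 *: a).
have shift : z - g2 *: a - zstar = z - zstar - g2 *: a by rewrite addrAC.
have mono : g2 * dotv a b <= dotv (z - zstar) b.
  have := G_monotone (z - g2 *: a) zstar.
  by rewrite G_zstar subr0 shift dotvBr dotvZr !(dotvC b); lra.
have lip : enorm (a - b) ^+ 2 <= L ^+ 2 * (g2 ^+ 2 * enorm a ^+ 2).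
  have := lipschitz_sqr L_ge0 G_lipschitz z (z - g2 *: a).
  by rewrite subKr enormZ_sqr.
have ab_lb : (1 - g2 ^+ 2 * L ^+ 2) * enorm a ^+ 2 <= 2 * dotv a b.
  by move: lip; rewrite enormB_sqr; have := sqr_ge0 (enorm b); lra.
by have := ler_wpM2l g2_ge0 ab_lb; lra.
Qed.

Lemma extragradient_norm_ub z :
  enorm (G (z - g2 *: G z)) ^+ 2 <= 4 * L ^+ 2 * enorm (z - zstar) ^+ 2.
Proof.
set a := G z; set w := z - zstar.
have a_ub : enorm a ^+ 2 <= L ^+ 2 * enorm w ^+ 2.
  by have := lipschitz_sqr L_ge0 G_lipschitz z zstar; rewrite G_zstar subr0.
have g2L_sqr : g2 ^+ 2 * L ^+ 2 <= 1.
  by rewrite -exprMn expr_le1 ?mulr_ge0.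
have g2a_ub : g2 ^+ 2 * enorm a ^+ 2 <= enorm w ^+ 2.
  have := ler_wpM2l (sqr_ge0 g2) a_ub.
  have := ler_wpM2r (sqr_ge0 (enorm w)) g2L_sqr.
  lra.
have shifted_ub : enorm (w - g2 *: a) ^+ 2 <= 4 * enorm w ^+ 2.
  by have := enormB_sqr_le w (g2 *: a); rewrite enormZ_sqr; lra.
have := lipschitz_sqr L_ge0 G_lipschitz (z - g2 *: a) zstar.
rewrite G_zstar subr0 addrAC -/w => b_ub.
by have := ler_wpM2l (sqr_ge0 L) shifted_ub; lra.
Qed.

Lemma extragradient_step_bound (c : R) z : 0 <= c ->
  enorm (z - zstar - c *: G (z - g2 *: G z)) ^+ 2
    <= (1 + 4 * c ^+ 2 * L ^+ 2) * enorm (z - zstar) ^+ 2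
       - c * g2 * (1 - g2 ^+ 2 * L ^+ 2) * enorm (G z) ^+ 2.
Proof.
move=> c_ge0; rewrite enormB_sqr dotvZr enormZ_sqr.
have := ler_wpM2l c_ge0 (extragradient_cross_lb z).
have := ler_wpM2l (sqr_ge0 c) (extragradient_norm_ub z).
lra.
Qed.

End ExtragradientStep.

Theorem lemma8 (R : realType) (d n : nat) (F : 'I_n -> 'rV[R]_d -> 'rV[R]_d)
  (Ls : 'I_n -> R) (L g1 g2 : R) (zstar z0 : 'rV[R]_d) (pi : nat -> 'S_n)
  (k : nat) :
  (0 < n)%N ->
  (forall i, lipschitz (Ls i) (F i)) ->
  monotone (meanop F) ->
  0 < L -> lipschitz L (meanop F) ->
  meanop F zstar = 0 ->
  0 < g2 -> g2 <= L^-1 -> 0 < g1 ->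
  let z := seg_rr g1 g2 F pi z0 k in
  let zhat := z - g2 *: meanop F z in
  enorm (z - zstar - (g1 * n%:R) *: meanop F zhat) ^+ 2
    <= (1 + 4 * g1 ^+ 2 * n%:R ^+ 2 * L ^+ 2) * enorm (z - zstar) ^+ 2
       - g1 * g2 * n%:R * (1 - g2 ^+ 2 * L ^+ 2) * enorm (meanop F z) ^+ 2.
Proof.
move=> _ _ F_monotone L_gt0 F_lipschitz F_zstar g2_gt0 g2_le g1_gt0 /=.
set z := seg_rr _ _ _ _ _ _.
have g2L_le1 : g2 * L <= 1 by rewrite -ler_pdivlMr // mul1r.
have := extragradient_step_bound F_monotone F_lipschitz F_zstar (ltW L_gt0)
  (ltW g2_gt0) g2L_le1 _ z (mulr_ge0 (ltW g1_gt0) (ler0n _ n)).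
by rewrite exprMn !mulrA (mulrAC g1).
Qed.
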